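(* Let $\mathcal{Z}$ be a finite set with probability distribution $\{p_z\}_{z\in\mathcal{Z}}$, let $\rho_z$ ($z\in\mathcal{Z}$) be density matrices on a finite-dimensional Hilbert space $\mathcal{H}^Q$, and let $\langle\rho\rangle=\sum_z p_z\rho_z$. For an integer $M\ge1$ define the states on $(\mathbb{C}^{|\mathcal{Z}|}\otimes\mathcal{H}^Q)^{\otimes M}$ $$\rho_{1,M}=\Big(\sum_z p_z|z\rangle\langle z|\otimes\rho_z\Big)^{\otimes M},\qquad \rho_{2,M}=\Big(\sum_z p_z|z\rangle\langle z|\otimes\langle\rho\rangle\Big)^{\otimes M},$$ which represent coherent access to $M$ independent samples from the ensemble $\mathcal{E}_1=\{(p_z,\rho_z)\}$ and from $\mathcal{E}_2=\{(p_z,\langle\rho\rangle)\}$ respectively (labels stored in classical registers, states in quantum registers). Suppose one of the two is given, each with prior probability $1/2$, and a simulation-free strategy, i.e. a two-outcome POVM $\{E_1,E_2=\mathbb{I}-E_1\}$ satisfying $(\pi_\tau^{\otimes M}\otimes\mathbb{I}_Q)E_1(\pi_\tau^{\otimes M}\otimes\mathbb{I}_Q)^\dagger=E_1$ for every permutation $\tau$ of $\mathcal{Z}$, is used to guess which (outcome $j$ means guessing $\mathcal{E}_j$). Then the success probability $p_{\rm succ}=\tfrac12\operatorname{Tr}[E_1\rho_{1,M}]+\tfrac12\operatorname{Tr}[E_2\rho_{2,M}]$ satisfies $$p_{\rm succ}\le\frac12+M^2\sum_{z\in\mathcal{Z}}p_z^2.$$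
   Context: $\pi_\tau$ is the permutation operator on a single classical register $\mathbb{C}^{|\mathcal{Z}|}$ with $\pi_\tau|z\rangle=|\tau(z)\rangle$, acting on each of the $M$ classical registers, and $\mathbb{I}_Q$ is the identity on all $M$ quantum registers. The POVM may be an arbitrary joint measurement on all $M$ classical and quantum registers (including entangled, adaptive or stochastic strategies); ''simulation-free'' means the strategy treats all labels $z$ symmetrically, as encoded by the permutation-invariance condition. *)

(* Operators on a finite-dimensional Hilbert space with
   orthonormal basis indexed by a finType T are represented by their matrix
   entries A : T -> T -> C, over an arbitrary numeric closed field C
   (e.g. the complex numbers). *)
From mathcomp Require Import all_boot all_order all_algebra.
From mathcomp Require Import fingroup perm.
Set Implicit Arguments. Unset Strict Implicit. Unset Printing Implicit Defensive.
Import Order.TTheory GRing.Theory Num.Theory.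
Local Open Scope ring_scope.

Definition op (C : numClosedFieldType) (T : finType) := T -> T -> C.

Definition psd {C : numClosedFieldType} {T : finType} (A : op C T) : Prop :=
  (forall x y, A y x = (A x y)^*) /\
  (forall v : T -> C, 0 <= \sum_x \sum_y (v x)^* * A x y * v y).

Definition opmul {C : numClosedFieldType} {T : finType} (A B : op C T) : op C T :=
  fun x y => \sum_k A x k * B k y.
Definition opadj {C : numClosedFieldType} {T : finType} (A : op C T) : op C T :=
  fun x y => (A y x)^*.
Definition opid {C : numClosedFieldType} {T : finType} : op C T :=
  fun x y => (x == y)%:R.
Definition opsub {C : numClosedFieldType} {T : finType} (A B : op C T) : op C T :=
  fun x y => A x y - B x y.
Definition optr {C : numClosedFieldType} {T : finType} (A : op C T) : C :=
  \sum_x A x x.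

Definition is_density {C : numClosedFieldType} {d : nat} (r : 'M[C]_d) : Prop :=
  psd (fun i j : 'I_d => r i j) /\ \tr r = 1.

Definition is_distribution {C : numClosedFieldType} {Z : finType} (p : Z -> C) : Prop :=
  (forall z, 0 <= p z) /\ \sum_z p z = 1.

Definition avg_state {C : numClosedFieldType} {Z : finType} {d : nat}
  (p : Z -> C) (rho : Z -> 'M[C]_d) : 'M[C]_d := \sum_z p z *: rho z.

(* one register C^{|Z|} (x) H^Q, basis indexed by Z * 'I_d;
   cq state sum_z p_z |z><z| (x) sigma_z *)
Definition cq_state {C : numClosedFieldType} {Z : finType} {d : nat}
  (p : Z -> C) (sigma : Z -> 'M[C]_d) : op C (Z * 'I_d)%type :=
  fun a b => (a.1 == b.1)%:R * p a.1 * sigma a.1 a.2 b.2.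

(* M-fold tensor power: basis of (C^{|Z|} (x) H^Q)^{(x) M} indexed by M-tuples *)
Definition regs (M : nat) (U : finType) : finType := {ffun 'I_M -> U}.

Definition tens_pow {C : numClosedFieldType} {U : finType} (M : nat) (A : op C U)
  : op C (regs M U) :=
  fun x y => \prod_(k < M) A (x k) (y k).

(* basis map of pi_tau^{(x)M} (x) I_Q: relabel every classical register by tau *)
Definition perm_regs {Z : finType} {d M : nat} (tau : {perm Z})
  (x : regs M (Z * 'I_d)%type) : regs M (Z * 'I_d)%type :=
  [ffun k => (tau (x k).1, (x k).2)].

Definition perm_op {C : numClosedFieldType} {Z : finType} {d M : nat} (tau : {perm Z})
  : op C (regs M (Z * 'I_d)%type) :=
  fun x y => (x == perm_regs tau y)%:R.

Definition simulation_free {C : numClosedFieldType} {Z : finType} {d M : nat}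
  (E1 : op C (regs M (Z * 'I_d)%type)) : Prop :=
  forall tau : {perm Z}, forall x y,
    opmul (opmul (perm_op tau) E1) (opadj (perm_op tau)) x y = E1 x y.

Arguments tens_pow {C U} M A _ _.

(* Both states are mixtures of the product states
   sigma(w, u) = |w><w| (x) rho_(u 1) (x) ... (x) rho_(u M), labelled by strings
   w, u in Z^M drawn i.i.d. from p: rho_(1,M) mixes sigma(w, w), rho_(2,M) mixes
   sigma(w, u) with w and u independent.  A simulation-free E_1 cannot tell apart
   labellings that differ by a permutation of Z, and any two injective strings do,
   so the acceptance probability t(w, u) = Tr[E_1 sigma(w, u)] equals t(u, u)
   whenever w and u are both injective.  In 2 p_succ - 1 = E[t(w, w)] - E[t(w, u)]
   the pairs of injective strings therefore cancel, and the rest is at most twice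
   the probability that a string repeats a label, which the union bound over pairs
   of positions bounds by M^2 sum_z p_z^2. *)

From mathcomp Require Import all_boot all_order all_algebra.
From mathcomp Require Import fingroup perm action primitive_action alt.
From mathcomp Require Import ring.
Set Implicit Arguments. Unset Strict Implicit. Unset Printing Implicit Defensive.
Import Order.TTheory GRing.Theory Num.Theory.
Local Open Scope ring_scope.

Section Operators.
Variables (C : numClosedFieldType) (X : finType).

Definition qform (A : op C X) (v : X -> C) : C := \sum_x \sum_y (v x)^* * A x y * v y.

Definition gram (J : finType) (lam : J -> C) (U : J -> X -> C) : op C X :=
  fun a b => \sum_j lam j * U j a * (U j b)^*.

Lemma sumr_delta (x : X) (F : X -> C) : \sum_y (x == y)%:R * F y = F x.
Proof.
rewrite (bigD1 x) //= eqxx mul1r big1 ?addr0 // => y /negbTE.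
by rewrite eq_sym => ->; rewrite mul0r.
Qed.

Lemma optr_opmul_lin (I : finType) (E S : op C X) (c : I -> C) (G : I -> op C X) :
  (forall x y, S x y = \sum_i c i * G i x y) ->
  optr (opmul E S) = \sum_i c i * optr (opmul E (G i)).
Proof.
move=> dS; under [RHS]eq_bigr do rewrite mulr_sumr.
rewrite exchange_big; apply: eq_bigr => x _; rewrite /opmul.
under [RHS]eq_bigr do rewrite mulr_sumr.
rewrite exchange_big; apply: eq_bigr => y _; rewrite dS mulr_sumr.
by apply: eq_bigr => i _; rewrite mulrCA.
Qed.

Lemma optr_opmul_id (S : op C X) : optr (opmul opid S) = optr S.
Proof. by apply: eq_bigr => x _; rewrite /opmul /opid sumr_delta. Qed.

Lemma optr_opmulBl (A B S : op C X) :
  optr (opmul (opsub A B) S) = optr (opmul A S) - optr (opmul B S).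
Proof.
rewrite -sumrB; apply: eq_bigr => x _; rewrite -sumrB.
by apply: eq_bigr => y _; rewrite mulrBl.
Qed.

Lemma qformBl (A B : op C X) (v : X -> C) :
  qform (opsub A B) v = qform A v - qform B v.
Proof.
rewrite -sumrB; apply: eq_bigr => x _; rewrite -sumrB.
by apply: eq_bigr => y _; rewrite /opsub mulrBr mulrBl.
Qed.

Lemma optr_opmul_gram (J : finType) (E S : op C X) (lam : J -> C) (U : J -> X -> C) :
  S =2 gram lam U -> optr (opmul E S) = \sum_j lam j * qform E (U j).
Proof.
move=> dS; have dS' x y : S x y = \sum_j lam j * (U j x * (U j y)^*).
  by rewrite dS; apply: eq_bigr => j _; rewrite mulrA.
rewrite (optr_opmul_lin _ dS'); apply: eq_bigr => j _; congr (_ * _).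
rewrite /qform; apply: eq_bigr => x _; apply: eq_bigr => y _.
by rewrite [U j y * _]mulrC mulrA [E x y * _]mulrC.
Qed.

Lemma optr_effect_bounds (J : finType) (E S : op C X) (lam : J -> C) (U : J -> X -> C) :
  psd E -> psd (opsub opid E) -> (forall j, 0 <= lam j) -> S =2 gram lam U ->
  0 <= optr (opmul E S) <= optr S.
Proof.
move=> [_ E_ge0] [_ IE_ge0] lam_ge0 dS.
rewrite -[optr S]optr_opmul_id !(optr_opmul_gram _ dS).
apply/andP; split; first by apply: sumr_ge0 => j _; exact: mulr_ge0 (lam_ge0 j) (E_ge0 _).
apply: ler_sum => j _; apply: ler_wpM2l => //.
by rewrite -subr_ge0 -qformBl; exact: IE_ge0.
Qed.

End Operators.

Lemma psd_spectral (C : numClosedFieldType) (n : nat) (A : 'M[C]_n) :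
  psd (fun i j : 'I_n => A i j) ->
  (forall j, 0 <= spectral_diag A 0 j) /\
  (fun i j => A i j) =2 gram (spectral_diag A 0) (fun j i => (spectralmx A j i)^*).
Proof.
move=> [herm A_ge0]; set P := spectralmx A; set D := spectral_diag A.
have A_normal : A \is normalmx.
  by apply/normalmxP; congr (_ *m _); apply/matrixP => i j; rewrite !mxE herm conjCK.
have PPt : (P *m P^t* = 1%:M)%sesqui := unitarymxP (spectral_unitarymx A).
have dA : (A = P^t* *m diag_mx D *m P)%sesqui.
  by rewrite -invmx_unitary ?spectral_unitarymx //; exact/orthomx_spectralP.
have dD : (diag_mx D = P *m A *m P^t*)%sesqui.
  by rewrite dA !mulmxA PPt mul1mx -mulmxA PPt mulmx1.
split=> [j|a b].
  have := A_ge0 (fun x => (P j x)^*); congr (0 <= _).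
  have /matrixP /(_ j j) := dD; rewrite mxE eqxx mulr1n => ->.
  rewrite mxE exchange_big; apply: eq_bigr => y _; rewrite !mxE mulr_suml.
  by under eq_bigr do rewrite conjCK.
rewrite /= dA mxE; apply: eq_bigr => k _.
by rewrite mul_mx_diag !mxE conjCK [_ * D 0 k]mulrC.
Qed.

Lemma prod_gram (C : numClosedFieldType) (I J X : finType)
    (lam : I -> J -> C) (U : I -> J -> X -> C) (y x : {ffun I -> X}) :
  \prod_k gram (lam k) (U k) (y k) (x k) =
  gram (fun js : {ffun I -> J} => \prod_k lam k (js k))
       (fun js (v : {ffun I -> X}) => \prod_k U k (js k) (v k)) y x.
Proof.
rewrite bigA_distr_bigA; apply: eq_bigr => js _.
by rewrite rmorph_prod -!big_split.
Qed.

Definition iid (C : numClosedFieldType) (Z I : finType) (p : Z -> C) (w : {ffun I -> Z}) : C :=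
  \prod_k p (w k).

Lemma is_distribution_iid (C : numClosedFieldType) (Z I : finType) (p : Z -> C) :
  is_distribution p -> is_distribution (@iid C Z I p).
Proof.
move=> [p_ge0 p_sum1]; split=> [w|]; first exact: prodr_ge0.
by rewrite /iid -(bigA_distr_bigA (fun=> p)) big1.
Qed.

Lemma prodr_pair (R : comPzSemiRingType) (I : finType) (F : I -> R) (i j : I) :
  i != j -> (forall k, k != i -> k != j -> F k = 1) -> \prod_k F k = F i * F j.
Proof.
move=> ij F1; rewrite (bigD1 i) //= (bigD1 j) 1?eq_sym //= big1 ?mulr1 // => k /andP[].
exact: F1.
Qed.

Lemma iid_collision (C : numClosedFieldType) (Z I : finType) (p : Z -> C) (i j : I) :
  is_distribution p -> i != j ->
  \sum_(w : {ffun I -> Z}) (w i == w j)%:R * iid p w = \sum_z p z ^+ 2.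
Proof.
move=> [_ p_sum1] ij.
pose G z k c := (if (k == i) || (k == j) then (z == c)%:R else 1) * p c.
have G_off z k : k != i -> k != j -> G z k =1 p.
  by move=> /negbTE ki /negbTE kj c; rewrite /G ki kj mul1r.
transitivity (\sum_z \sum_(w : {ffun I -> Z}) \prod_k G z k (w k)).
  rewrite exchange_big; apply: eq_bigr => w _.
  rewrite -(sumr_delta (w i) (fun z => (z == w j)%:R * iid p w)).
  apply: eq_bigr => z _; rewrite /G big_split /= (prodr_pair ij); last first.
    by move=> k /negbTE -> /negbTE ->.
  by rewrite !eqxx orbT /= (eq_sym z (w i)) mulrA.
apply: eq_bigr => z _; rewrite -(bigA_distr_bigA (G z)) (prodr_pair ij); last first.
  by move=> k ki kj; rewrite (eq_bigr _ (fun c _ => G_off z k ki kj c)).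
by rewrite /G !eqxx orbT /= !sumr_delta expr2.
Qed.

Lemma iid_noninjective_le (C : numClosedFieldType) (Z I : finType) (p : Z -> C) :
  is_distribution p ->
  \sum_(w : {ffun I -> Z} | ~~ injectiveb w) iid p w <= #|I|%:R ^+ 2 * \sum_z p z ^+ 2.
Proof.
move=> p_dist; have [iid_ge0 _] := is_distribution_iid I p_dist.
pose collisions (w : {ffun I -> Z}) := \sum_i \sum_(j | j != i) (w i == w j)%:R * iid p w.
have collisions_ge0 w : 0 <= collisions w.
  by do 2!(apply: sumr_ge0 => ? _); exact: mulr_ge0.
have S_ge0 : 0 <= \sum_z p z ^+ 2 by apply: sumr_ge0 => z _; exact: exprn_ge0 (p_dist.1 z).
apply: le_trans (_ : _ <= \sum_w collisions w) _.
  rewrite [X in _ <= X](bigID (fun w : {ffun I -> Z} => ~~ injectiveb w)) /=.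
  apply: ler_wpDr; first exact: sumr_ge0.
  apply: ler_sum => w /injectivePn [i [j ij wij]].
  rewrite /collisions (bigD1 i) //= (bigD1 j) 1?eq_sym //= wij eqxx mul1r -addrA lerDl.
  by apply: addr_ge0; do 2?[apply: sumr_ge0 => ? _]; exact: mulr_ge0.
rewrite exchange_big; under eq_bigr do rewrite exchange_big.
apply: le_trans (_ : _ <= \sum_(i : I) \sum_(j : I) \sum_z p z ^+ 2) _.
  apply: ler_sum => i _; rewrite [X in _ <= X](bigD1 i) //=; apply: ler_wpDl S_ge0 _.
  by apply: ler_sum => j ji; rewrite iid_collision 1?eq_sym.
by rewrite !sumr_const -mulrnA -[leLHS]mulr_natl natrM -expr2.
Qed.

Lemma mixture_gap_le (C : numClosedFieldType) (W : finType) (q : W -> C)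
    (t : W -> W -> C) (G : pred W) :
  is_distribution q -> (forall w u, 0 <= t w u <= 1) ->
  {in G &, forall w u, t w u = t u u} ->
  \sum_w q w * t w w - \sum_w \sum_u q w * q u * t w u <= 2 * \sum_(w | ~~ G w) q w.
Proof.
move=> [q_ge0 q_sum1] t01 tG.
pose F w u := (G w && G u)%:R * (q w * q u) * t w w.
pose B w u := ((~~ G w)%:R + (~~ G u)%:R) * (q w * q u).
have gapE : \sum_w q w * t w w - \sum_w \sum_u q w * q u * t w u =
            \sum_w \sum_u q w * q u * (t w w - t w u).
  rewrite -sumrB; apply: eq_bigr => w _.
  rewrite -[q w * _]mulr1 -q_sum1 mulr_sumr -sumrB.
  by apply: eq_bigr => u _; rewrite mulrBr mulrAC.
(* Inside [G] the gap is antisymmetric in [(w, u)]; outside it is at most 1. *)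
have termwise w u : q w * q u * (t w w - t w u) <= F w u - F u w + B w u.
  rewrite /F /B; case: (boolP (G w && G u)) => [/andP [Gw Gu] | notG].
    rewrite Gw Gu /= tG // [X in _ <= X](_ : _ = q w * q u * (t w w - t u u)) //.
    by rewrite !mul1r addr0 mul0r addr0 mulrBr [q u * q w]mulrC.
  rewrite andbC (negbTE notG) !mul0r subrr add0r mulrC.
  apply: ler_wpM2r; first exact: mulr_ge0.
  have /andP [_ tww_le1] := t01 w w; have /andP [twu_ge0 _] := t01 w u.
  apply: le_trans (_ : 1 <= _); first by rewrite (le_trans _ tww_le1) ?gerBl.
  move: notG; rewrite negb_and.
  by case: (G w); case: (G u); rewrite //= ?add0r ?addr0 // -natrD ler1n.
have sumF : \sum_w \sum_u (F w u - F u w) = 0.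
  by under eq_bigr do rewrite sumrB; rewrite sumrB exchange_big subrr.
have sumB : \sum_w \sum_u B w u = 2 * \sum_(w | ~~ G w) q w.
  have sum_half : \sum_w \sum_u (~~ G w)%:R * (q w * q u) = \sum_(w | ~~ G w) q w.
    rewrite [RHS]big_mkcond; apply: eq_bigr => w _.
    by rewrite -!mulr_sumr q_sum1 mulr1; case: (G w); rewrite /= ?mul0r ?mul1r.
  rewrite /B; under eq_bigr do under eq_bigr do rewrite mulrDl.
  under eq_bigr do rewrite big_split; rewrite big_split /= [X in _ + X]exchange_big /=.
  under [X in _ + X]eq_bigr do under eq_bigr do rewrite [q _ * q _]mulrC.
  by rewrite sum_half mulr_natl mulr2n.
apply: le_trans (_ : _ <= \sum_w \sum_u (F w u - F u w + B w u)) _.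
  by rewrite gapE; apply: ler_sum => w _; apply: ler_sum => u _; exact: termwise.
by under eq_bigr do rewrite big_split; rewrite big_split /= sumF sumB add0r.
Qed.

Section LabelledStates.
Variables (C : numClosedFieldType) (Z : finType) (d M : nat).
Variables (p : Z -> C) (rho : Z -> 'M[C]_d).

(* |w><w| (x) rho_(u 1) (x) ... (x) rho_(u M), with the factors grouped register by register *)
Definition labelled_state (w u : {ffun 'I_M -> Z}) : op C (regs M (Z * 'I_d)%type) :=
  fun y x => \prod_k ((((y k).1 == w k) && ((x k).1 == w k))%:R * rho (u k) (y k).2 (x k).2).

Lemma cq_stateE (sigma : Z -> 'M[C]_d) (a b : (Z * 'I_d)%type) :
  cq_state p sigma a b = \sum_z p z * ((a.1 == z) && (b.1 == z))%:R * sigma z a.2 b.2.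
Proof.
rewrite /cq_state (eq_bigr (fun z => (a.1 == z)%:R * ((b.1 == z)%:R * p z * sigma z a.2 b.2))).
  by rewrite sumr_delta eq_sym.
move=> z _.
by case: (a.1 == z); case: (b.1 == z); rewrite /= ?(mul0r, mulr0, mul1r, mulr1).
Qed.

Lemma avg_stateE (a b : 'I_d) : avg_state p rho a b = \sum_z p z * rho z a b.
Proof. by rewrite /avg_state summxE; apply: eq_bigr => z _; rewrite mxE. Qed.

Lemma tens_pow_cq_state :
  tens_pow M (cq_state p rho) =2 fun y x => \sum_w iid p w * labelled_state w w y x.
Proof.
move=> y x; rewrite /tens_pow; under eq_bigr do rewrite cq_stateE.
rewrite bigA_distr_bigA; apply: eq_bigr => w _; rewrite -big_split.
by apply: eq_bigr => k _; rewrite -mulrA.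
Qed.

Lemma tens_pow_cq_avg_state :
  tens_pow M (cq_state p (fun=> avg_state p rho)) =2 fun y x =>
    \sum_(wu : {ffun 'I_M -> Z} * {ffun 'I_M -> Z})
      iid p wu.1 * iid p wu.2 * labelled_state wu.1 wu.2 y x.
Proof.
move=> y x; rewrite /tens_pow.
rewrite -(pair_bigA _ (fun w u => iid p w * iid p u * labelled_state w u y x)) /=.
under eq_bigr => k _.
  rewrite cq_stateE; under eq_bigr => z _ do rewrite avg_stateE mulr_sumr.
over.
rewrite bigA_distr_bigA; apply: eq_bigr => w _; rewrite bigA_distr_bigA.
apply: eq_bigr => u _; rewrite -!big_split; apply: eq_bigr => k _ /=.
by rewrite -!mulrA; congr (_ * _); exact: mulrCA.
Qed.

Lemma optr_labelled_state (w u : {ffun 'I_M -> Z}) :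
  (forall z, \tr (rho z) = 1) -> optr (labelled_state w u) = 1.
Proof.
move=> tr_rho; rewrite /optr /labelled_state.
rewrite -(bigA_distr_bigA (fun k (c : (Z * 'I_d)%type) =>
  ((c.1 == w k) && (c.1 == w k))%:R * rho (u k) c.2 c.2)) big1 // => k _.
rewrite -(pair_bigA _ (fun z a => ((z == w k) && (z == w k))%:R * rho (u k) a a)) /=.
rewrite (eq_bigr (fun z => (w k == z)%:R * \tr (rho (u k)))) ?sumr_delta //.
by move=> z _; rewrite andbb eq_sym mulr_sumr.
Qed.

Lemma optr_tens_pow_cq_avg_state :
  is_distribution p -> (forall z, \tr (rho z) = 1) ->
  optr (tens_pow M (cq_state p (fun=> avg_state p rho))) = 1.
Proof.
move=> p_dist tr_rho; have [_ iid_sum1] := is_distribution_iid 'I_M p_dist.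
rewrite -optr_opmul_id (optr_opmul_lin _ tens_pow_cq_avg_state).
under eq_bigr do rewrite optr_opmul_id optr_labelled_state // mulr1.
rewrite -(pair_bigA _ (fun w u => iid p w * iid p u)) /=.
by under eq_bigr do rewrite -mulr_sumr iid_sum1 mulr1.
Qed.

Lemma acceptance_bounds (E1 : op C (regs M (Z * 'I_d)%type)) (w u : {ffun 'I_M -> Z}) :
  (forall z, is_density (rho z)) -> psd E1 -> psd (opsub opid E1) ->
  0 <= optr (opmul E1 (labelled_state w u)) <= 1.
Proof.
move=> rho_dens E1_psd IE1_psd.
have rho_spectral z := psd_spectral (rho_dens z).1.
pose lam k := spectral_diag (rho (u k)) 0.
pose U k j (c : (Z * 'I_d)%type) := (c.1 == w k)%:R * (spectralmx (rho (u k)) j c.2)^*.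
have lam_ge0 (js : {ffun 'I_M -> 'I_d}) : 0 <= \prod_k lam k (js k).
  by apply: prodr_ge0 => k _; exact: (rho_spectral (u k)).1.
have dS : labelled_state w u =2
    gram (fun js : {ffun 'I_M -> 'I_d} => \prod_k lam k (js k))
         (fun js (v : regs M (Z * 'I_d)%type) => \prod_k U k (js k) (v k)).
  move=> y x; rewrite -prod_gram; apply: eq_bigr => k _.
  rewrite /= ((rho_spectral (u k)).2 (y k).2 (x k).2) /gram mulr_sumr.
  apply: eq_bigr => j _; rewrite /lam /U rmorphM rmorph_nat -mulnb natrM; ring.
rewrite -(optr_labelled_state w u) => [|z]; last by case: (rho_dens z).
exact: optr_effect_bounds E1_psd IE1_psd lam_ge0 dS.
Qed.

End LabelledStates.

Lemma perm_extend_inj (T : finType) (n : nat) (v w : 'I_n -> T) :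
  injective v -> injective w -> exists tau : {perm T}, forall k, tau (v k) = w k.
Proof.
move=> v_inj w_inj; have le_nT : (n <= #|T|)%N by rewrite -[n]card_ord; exact: leq_card v_inj.
have tupleT := ntransitive_weak le_nT (Sym_trans T).
have dtuple f : injective f -> [tuple f i | i < n] \in n.-dtuple([set: T]).
  by move=> f_inj; apply/dtuple_onP; split=> [i j|i]; rewrite ?inE // !tnth_mktuple => /f_inj.
have [tau _ vw] := atransP2 tupleT (dtuple v v_inj) (dtuple w w_inj).
exists tau => k; have := congr1 (fun t => tnth t k) vw.
by rewrite /= !tnth_map tnth_ord_tuple => ->.
Qed.

Section Relabelling.
Variables (C : numClosedFieldType) (Z : finType) (d M : nat).
Variables (rho : Z -> 'M[C]_d) (E1 : op C (regs M (Z * 'I_d)%type)).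
Hypothesis E1_simulation_free : simulation_free E1.

Lemma perm_regs_inj (tau : {perm Z}) : injective (@perm_regs Z d M tau).
Proof.
move=> y x /ffunP yx; apply/ffunP => k; have := yx k; rewrite !ffunE.
by case: (y k) (x k) => [z a] [z' a'] [/perm_inj -> ->].
Qed.

Lemma simulation_free_perm_regs (tau : {perm Z}) (y x : regs M (Z * 'I_d)%type) :
  E1 (perm_regs tau y) (perm_regs tau x) = E1 y x.
Proof.
rewrite -[LHS](E1_simulation_free tau) /opmul /opadj /perm_op.
transitivity (\sum_x' (x == x')%:R * \sum_y' (y == y')%:R * E1 y' x').
  apply: eq_bigr => x' _; rewrite (inj_eq (@perm_regs_inj tau)) conjC_nat mulrC.
  by congr (_ * _); apply: eq_bigr => y' _; rewrite (inj_eq (@perm_regs_inj tau)).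
by rewrite sumr_delta sumr_delta.
Qed.

Lemma labelled_state_perm_regs (tau : {perm Z}) (v w u : {ffun 'I_M -> Z})
    (y x : regs M (Z * 'I_d)%type) :
  (forall k, tau (v k) = w k) ->
  labelled_state rho w u (perm_regs tau y) (perm_regs tau x) = labelled_state rho v u y x.
Proof.
by move=> vw; apply: eq_bigr => k _; rewrite !ffunE /= -!vw !(inj_eq perm_inj).
Qed.

Lemma acceptance_relabel (tau : {perm Z}) (v w u : {ffun 'I_M -> Z}) :
  (forall k, tau (v k) = w k) ->
  optr (opmul E1 (labelled_state rho w u)) = optr (opmul E1 (labelled_state rho v u)).
Proof.
move=> vw; rewrite /optr /opmul (reindex_inj (@perm_regs_inj tau)).
apply: eq_bigr => x _; rewrite (reindex_inj (@perm_regs_inj tau)).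
by apply: eq_bigr => y _; rewrite simulation_free_perm_regs (labelled_state_perm_regs _ _ _ vw).
Qed.

Lemma acceptance_injective_labels (w u : {ffun 'I_M -> Z}) :
  injective w -> injective u ->
  optr (opmul E1 (labelled_state rho w u)) = optr (opmul E1 (labelled_state rho u u)).
Proof.
by move=> w_inj u_inj; have [tau uw] := perm_extend_inj u_inj w_inj; exact: acceptance_relabel uw.
Qed.

End Relabelling.

Theorem theorem2 (C : numClosedFieldType) (Z : finType) (d M : nat)
  (p : Z -> C) (rho : Z -> 'M[C]_d)
  (E1 : op C (regs M (Z * 'I_d)%type)) :
  is_distribution p ->
  (forall z, is_density (rho z)) ->
  (0 < M)%N ->
  psd E1 -> psd (opsub opid E1) ->
  simulation_free E1 ->
  let rho1M := tens_pow M (cq_state p rho) in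
  let rho2M := tens_pow M (cq_state p (fun _ => avg_state p rho)) in
  let E2 := opsub opid E1 in
  let psucc := 2^-1 * optr (opmul E1 rho1M) + 2^-1 * optr (opmul E2 rho2M) in
  psucc <= 2^-1 + (M%:R) ^+ 2 * \sum_z p z ^+ 2.
Proof.
move=> p_dist rho_dens _ E1_psd IE1_psd E1_sf /=.
have tr_rho z : \tr (rho z) = 1 by case: (rho_dens z).
set t := fun w u => optr (opmul E1 (labelled_state rho w u)).
have accept1 : optr (opmul E1 (tens_pow M (cq_state p rho))) = \sum_w iid p w * t w w.
  exact: optr_opmul_lin (tens_pow_cq_state p rho).
have accept2 : optr (opmul E1 (tens_pow M (cq_state p (fun=> avg_state p rho)))) =
               \sum_w \sum_u iid p w * iid p u * t w u.
  by rewrite (optr_opmul_lin _ (tens_pow_cq_avg_state p rho)) pair_bigA.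
have t01 w u : 0 <= t w u <= 1 by exact: acceptance_bounds.
have t_inj : {in [pred w : {ffun 'I_M -> Z} | injectiveb w] &, forall w u, t w u = t u u}.
  by move=> w u /injectiveP w_inj /injectiveP u_inj; exact: acceptance_injective_labels.
have gap := mixture_gap_le (is_distribution_iid 'I_M p_dist) t01 t_inj.
have birthday := iid_noninjective_le 'I_M p_dist; rewrite card_ord in birthday.
rewrite optr_opmulBl optr_opmul_id optr_tens_pow_cq_avg_state // accept1 accept2.
rewrite mulrBr mulr1 addrCA -mulrBr lerD2l.
apply: le_trans (ler_wpM2l _ gap) _; first by rewrite invr_ge0 ler0n.
by rewrite mulrA mulVf ?pnatr_eq0 // mul1r.
Qed.
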